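(* Let $T=((\Omega,\mathcal{A}),\{(\Omega,\mathcal{M}_i)\}_{i\in N},\{t_i\}_{i\in N})$ be a type space. The players' beliefs in $T$ are consistent if and only if $\bigcap_{i\in N}\Pi_i\ne\emptyset$.
   Context: A field on a set $X$ is a collection of subsets of $X$ containing $X$ and closed under complements and finite intersections. For a field $\mathcal{A}$ on $\Omega$, $\mathrm{pba}(\Omega,\mathcal{A})$ is the set of finitely additive nonnegative $P:\mathcal{A}\to\mathbb{R}$ with $P(\Omega)=1$; $B(\Omega,\mathcal{A})$ the sup-norm closure of the linear span of indicators of sets in $\mathcal{A}$; bounded finitely additive set functions carry the weak* topology (weakest making $\mu\mapsto\int f\,d\mu$ continuous for all $f\in B(\Omega,\mathcal{A})$), $\overline{\,\cdot\,}^\ast$ denotes weak* closure. A type space: $N$ a nonempty (possibly infinite) set of players, fields $\mathcal{M}_i\subseteq\mathcal{A}$ on a set $\Omega$, $t_i:\Omega\times\mathcal{A}\to[0,1]$ with $t_i(\omega,\cdot)\in\mathrm{pba}(\Omega,\mathcal{A})$, $t_i(\cdot,E)\in B(\Omega,\mathcal{M}_i)$ for $E\in\mathcal{A}$, and $t_i(\omega,E)=1$ whenever $E\in\mathcal{M}_i$, $\omega\in E$. $\Pi_i=\overline{\mathrm{conv}\{t_i(\omega,\cdot):\omega\in\Omega\}}^\ast$ (equivalently the $P\in\mathrm{pba}(\Omega,\mathcal{A})$ with $P(E\cap F)=\int_F t_i(\cdot,E)\,dP$ for all $E\in\mathcal{A},F\in\mathcal{M}_i$). The players' beliefs are consistent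 if $\bigcap_{i\in I}\Pi_i\ne\emptyset$ for every finite $I\subseteq N$. *)

From mathcomp Require Import all_boot all_order all_algebra.
From mathcomp Require Import boolp classical_sets cardinality reals.
From Stdlib Require List.
Set Implicit Arguments. Unset Strict Implicit. Unset Printing Implicit Defensive.
Import Order.TTheory GRing.Theory Num.Theory.
Local Open Scope classical_set_scope.
Local Open Scope ring_scope.

Section TypeSpaces.
Variables (R : realType) (Omega : Type).

Definition is_field (F : set (set Omega)) : Prop :=
  F setT /\ (forall E, F E -> F (~` E)) /\ (forall E G, F E -> F G -> F (E `&` G)).

Definition ind (E : set Omega) (x : Omega) : R := if `[< E x >] then 1 else 0.

(* A finite linear combination of indicators of sets in F, given by a list of
   (coefficient, set) pairs. *)
Definition simple_in (F : set (set Omega)) (s : seq (R * set Omega)) : Prop :=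
  forall p, List.In p s -> F p.2.

Definition simple_eval (s : seq (R * set Omega)) (x : Omega) : R :=
  \sum_(p <- s) p.1 * ind p.2 x.

(* B(Omega, F): sup-norm closure of the linear span of indicators of sets in F. *)
Definition in_B (F : set (set Omega)) (f : Omega -> R) : Prop :=
  forall eps : R, 0 < eps -> exists s, simple_in F s /\
    forall x, `|f x - simple_eval s x| <= eps.

Definition fin_additive (A : set (set Omega)) (mu : set Omega -> R) : Prop :=
  forall E G, A E -> A G -> E `&` G = set0 -> mu (E `|` G) = mu E + mu G.

Definition ba (A : set (set Omega)) (mu : set Omega -> R) : Prop :=
  fin_additive A mu /\ exists m : R, forall E, A E -> `|mu E| <= m.

Definition pba (A : set (set Omega)) (P : set Omega -> R) : Prop :=
  fin_additive A P /\ (forall E, A E -> 0 <= P E) /\ P setT = 1.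

Definition simple_int (mu : set Omega -> R) (s : seq (R * set Omega)) : R :=
  \sum_(p <- s) p.1 * mu p.2.

Definition is_integral (A : set (set Omega)) (mu : set Omega -> R)
    (f : Omega -> R) (r : R) : Prop :=
  forall eps : R, 0 < eps -> exists delta : R, 0 < delta /\
    forall s, simple_in A s -> (forall x, `|f x - simple_eval s x| < delta) ->
      `|simple_int mu s - r| < eps.

Definition integral (A : set (set Omega)) (mu : set Omega -> R)
    (f : Omega -> R) : R := xget 0 [set r | is_integral A mu f r].

(* weak* closure (in the space of bounded finitely additive set functions) of a
   set S: every basic weak* neighbourhood of mu meets S (neighbourhoods given by finitely many f in B(Omega,A) and eps>0). *)
Definition weak_star_closure (A : set (set Omega)) (S : set (set Omega -> R))
    (mu : set Omega -> R) : Prop :=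
  ba A mu /\
  forall (fs : seq (Omega -> R)) (eps : R), (forall f, List.In f fs -> in_B A f) ->
    0 < eps -> exists nu, S nu /\
      forall f, List.In f fs -> `|integral A mu f - integral A nu f| < eps.

Definition conv_hull (S : set (set Omega -> R)) : set (set Omega -> R) :=
  [set mu | exists l : seq (R * (set Omega -> R)),
     (forall p, List.In p l -> 0 <= p.1 /\ S p.2) /\
     \sum_(p <- l) p.1 = 1 /\
     forall E, mu E = \sum_(p <- l) p.1 * p.2 E].

Variable N : Type.

Definition type_space (A : set (set Omega)) (M : N -> set (set Omega))
    (t : N -> Omega -> set Omega -> R) : Prop :=
  is_field A /\
  (forall i, is_field (M i) /\ M i `<=` A) /\
  (forall i w E, A E -> 0 <= t i w E <= 1) /\
  (forall i w, pba A (t i w)) /\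
  (forall i E, A E -> in_B (M i) (fun w => t i w E)) /\
  (forall i E w, M i E -> E w -> t i w E = 1).

Definition Pi (A : set (set Omega)) (t : N -> Omega -> set Omega -> R) (i : N) :
  set (set Omega -> R) :=
  weak_star_closure A (conv_hull [set t i w | w in setT]).

Definition consistent (A : set (set Omega)) (t : N -> Omega -> set Omega -> R) : Prop :=
  forall I : set N, finite_set I -> exists mu, forall i, I i -> Pi A t i mu.

End TypeSpaces.

(* Every Pi_i consists of probability charges, and consistency gives, for each
   finite set I of players, a common point g I of the Pi_i with i in I.  Take an
   ultrafilter U on the finite subsets of N containing, for every finite J, the
   family of finite supersets of J, and let mu be the pointwise U-limit of g.
   Then mu is again a probability charge, and since |int s dnu| <= 2 m sup|s| for
   simple s and any charge nu bounded by m, integrals of functions in B against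
   g I converge along U to those against mu.  As g I lies in Pi_i for U-almost
   all I, every weak* neighbourhood of mu meets conv {t_i(w, .)}, so mu lies in
   every Pi_i. *)

From mathcomp Require Import all_boot all_order all_algebra.
From mathcomp Require Import boolp classical_sets cardinality reals filter.
From mathcomp Require Import ring lra.
Set Implicit Arguments. Unset Strict Implicit. Unset Printing Implicit Defensive.
Import Order.TTheory GRing.Theory Num.Theory.
Local Open Scope classical_set_scope.
Local Open Scope ring_scope.

Lemma eq_of_dist_lt (R : realType) (x y : R) :
  (forall e, 0 < e -> `|x - y| < e) -> x = y.
Proof.
move=> h; apply/eqP; rewrite -subr_eq0 -normr_le0 leNgt; apply/negP => hpos.
by have := h _ hpos; rewrite ltxx.
Qed.

Lemma ge0_of_near_ge0 (R : realType) (x : R) :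
  (forall e, 0 < e -> exists z, 0 <= z /\ `|x - z| < e) -> 0 <= x.
Proof.
move=> h; rewrite leNgt; apply/negP => hx.
have [|z [hz]] := h (- x); first by rewrite oppr_gt0.
by rewrite ltr_norml => /andP[]; lra.
Qed.

Lemma sum_In_eq (R : realType) (T : Type) (l : seq T) (F G : T -> R) :
  (forall p, List.In p l -> F p = G p) ->
  \sum_(p <- l) F p = \sum_(p <- l) G p.
Proof.
elim: l => [|p l IH] h; first by rewrite !big_nil.
by rewrite !big_cons h ?IH //; [move=> q hq; apply: h; right | left].
Qed.

Lemma sum_In_ge0 (R : realType) (T : Type) (l : seq T) (F : T -> R) :
  (forall p, List.In p l -> 0 <= F p) -> 0 <= \sum_(p <- l) F p.
Proof.
elim: l => [|p l IH] h; first by rewrite big_nil.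
by rewrite big_cons addr_ge0 ?IH //; [apply: h; left | move=> q hq; apply: h; right].
Qed.

Section Fields.
Variables (Omega : Type) (A : set (set Omega)).
Hypothesis HA : is_field A.

Lemma field_setT : A setT. Proof. by case: HA. Qed.
Lemma field_setC E : A E -> A (~` E). Proof. by case: HA => _ [hC _]; apply: hC. Qed.
Lemma field_setI E G : A E -> A G -> A (E `&` G). Proof. by case: HA => _ [_ hI]; apply: hI. Qed.
Lemma field_set0 : A set0. Proof. by rewrite -setCT; exact/field_setC/field_setT. Qed.

Lemma field_setU E G : A E -> A G -> A (E `|` G).
Proof.
by move=> hE hG; rewrite -[E `|` G]setCK setCU; apply/field_setC/field_setI; apply: field_setC.
Qed.

End Fields.

Section FinitelyAdditive.
Variables (R : realType) (Omega : Type) (A : set (set Omega)) (mu : set Omega -> R).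
Hypotheses (HA : is_field A) (Hadd : fin_additive A mu).

Lemma fin_additive_set0 : mu set0 = 0.
Proof.
have := Hadd (field_set0 HA) (field_set0 HA) (setI0 _); rewrite setU0; lra.
Qed.

Lemma fin_additive_setIC X E : A X -> A E -> mu X = mu (X `&` E) + mu (X `&` ~` E).
Proof.
move=> hX hE; rewrite -Hadd; first by rewrite -setIUr setUCr setIT.
- by apply: field_setI.
- by apply: field_setI => //; apply: field_setC.
- by rewrite -subset0 => x [[_ ?] [_ ?]].
Qed.

Definition simple_int_on (G : set Omega) (s : seq (R * set Omega)) : R :=
  \sum_(p <- s) p.1 * mu (p.2 `&` G).

Lemma simple_int_on_setIC s G E : simple_in A s -> A G -> A E ->
  simple_int_on G s = simple_int_on (G `&` E) s + simple_int_on (G `&` ~` E) s.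
Proof.
move=> hs hG hE; rewrite /simple_int_on -big_split /=; apply: sum_In_eq => p hp.
have hpG : A (p.2 `&` G) by apply: field_setI => //; apply: hs.
rewrite (fin_additive_setIC hpG hE) !setIA; ring.
Qed.

(* For [G = setT] the spread [mu P - mu Q] is at most twice a bound of [mu]. *)
Definition osc_bounded (G : set Omega) (c r : R) : Prop := exists P Q,
  [/\ A P, A Q, P `<=` G, Q `<=` G & `|r| <= c * (mu P - mu Q)].

Lemma osc_bounded_scale G a c : A G -> 0 <= c -> (forall x, G x -> `|a| <= c) ->
  osc_bounded G c (a * mu G).
Proof.
move=> hG hc ha; have h0 := field_set0 HA.
have [[x Gx]|nG] := pselect (exists x, G x); last first.
  have -> : G = set0 by apply/seteqP; split => // x Gx; apply: nG; exists x.
  by exists set0, set0; split; rewrite // fin_additive_set0 mulr0 normr0 subrr mulr0.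
have hac := ha x Gx.
have [hm|hm] := leP 0 (mu G).
  exists G, set0; split; rewrite // normrM fin_additive_set0 subr0 (ger0_norm hm).
  exact: ler_wpM2r.
exists set0, G; split; rewrite // normrM fin_additive_set0 sub0r (ltr0_norm hm).
by apply: ler_wpM2r; rewrite // oppr_ge0 ltW.
Qed.

Lemma osc_boundedD G E c r1 r2 : A G -> A E ->
  osc_bounded (G `&` E) c r1 -> osc_bounded (G `&` ~` E) c r2 ->
  osc_bounded G c (r1 + r2).
Proof.
move=> hG hE [P1 [Q1 [hP1 hQ1 sP1 sQ1 b1]]] [P2 [Q2 [hP2 hQ2 sP2 sQ2 b2]]].
have disj (X Y : set Omega) : X `<=` G `&` E -> Y `<=` G `&` ~` E -> X `&` Y = set0.
  by move=> sX sY; rewrite -subset0 => x [/sX [_ ?] /sY [_ ?]].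
exists (P1 `|` P2), (Q1 `|` Q2); split; try exact: field_setU.
- by move=> x [/sP1 []|/sP2 []].
- by move=> x [/sQ1 []|/sQ2 []].
rewrite (Hadd hP1 hP2 (disj _ _ sP1 sP2)) (Hadd hQ1 hQ2 (disj _ _ sQ1 sQ2)).
apply: le_trans (ler_normD _ _) _.
have -> : c * (mu P1 + mu P2 - (mu Q1 + mu Q2)) =
  c * (mu P1 - mu Q1) + c * (mu P2 - mu Q2) by ring.
exact: lerD.
Qed.

(* Refining the partition generated by the sets of [s] one set at a time,
   [a] accumulates the value of the simple function on the current atom [G]. *)
Lemma simple_int_on_osc s : simple_in A s -> forall G a c, A G -> 0 <= c ->
  (forall x, G x -> `|a + simple_eval s x| <= c) ->
  osc_bounded G c (a * mu G + simple_int_on G s).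
Proof.
elim: s => [|[b F] s IH] hs G a c hG hc hb.
  rewrite /simple_int_on big_nil addr0; apply: osc_bounded_scale => // x Gx.
  by have := hb x Gx; rewrite /simple_eval big_nil addr0.
have hs' : simple_in A s by move=> p hp; apply: hs; right.
have hF : A F by apply: (hs (b, F)); left.
have -> : a * mu G + simple_int_on G ((b, F) :: s) =
    ((a + b) * mu (G `&` F) + simple_int_on (G `&` F) s) +
    (a * mu (G `&` ~` F) + simple_int_on (G `&` ~` F) s).
  rewrite {1}/simple_int_on big_cons /= -/(simple_int_on G s).
  rewrite (simple_int_on_setIC hs' hG hF) (fin_additive_setIC hG hF) [F `&` G]setIC.
  ring.
apply: (osc_boundedD hG hF); apply: IH => //.
- by apply: field_setI.
- move=> x [Gx Fx]; have := hb x Gx.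
  by rewrite /simple_eval big_cons /ind asboolT //= mulr1 addrA.
- by apply: field_setI => //; apply: field_setC.
- move=> x [Gx nFx]; have := hb x Gx.
  by rewrite /simple_eval big_cons /ind asboolF //= mulr0 add0r.
Qed.

Variable m : R.
Hypothesis Hm : forall E, A E -> `|mu E| <= m.

Lemma charge_bound_ge0 : 0 <= m.
Proof. exact: le_trans (normr_ge0 _) (Hm (field_setT HA)). Qed.

Lemma simple_int_bound s c : simple_in A s -> 0 <= c ->
  (forall x, `|simple_eval s x| <= c) -> `|simple_int mu s| <= 2 * m * c.
Proof.
move=> hs hc hb.
have [] := @simple_int_on_osc s hs setT 0 c (field_setT HA) hc.
  by move=> x _; rewrite add0r.
move=> P [Q [hP hQ _ _]]; rewrite mul0r add0r.
have -> : simple_int_on setT s = simple_int mu s.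
  by apply: eq_bigr => p _; rewrite setIT.
move=> b; apply: le_trans b _.
have : mu P - mu Q <= m + m.
  by have := Hm hP; have := Hm hQ; rewrite !ler_norml => /andP[? ?] /andP[? ?]; lra.
by move/(ler_wpM2l hc); lra.
Qed.

End FinitelyAdditive.

Section Integral.
Variables (R : realType) (Omega : Type) (A : set (set Omega)).

Definition approximates (f : Omega -> R) (s : seq (R * set Omega)) (e : R) : Prop :=
  [/\ simple_in A s, 0 <= e & forall x, `|f x - simple_eval s x| <= e].

Lemma is_integral_unique (mu : set Omega -> R) f r r' : in_B A f ->
  is_integral A mu f r -> is_integral A mu f r' -> r = r'.
Proof.
move=> hf h1 h2; apply: eq_of_dist_lt => eps heps.
have he2 : 0 < eps / 2 by exact: divr_gt0.
have [d1 [hd1 k1]] := h1 _ he2; have [d2 [hd2 k2]] := h2 _ he2.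
have hd : 0 < Num.min d1 d2 / 2 by rewrite divr_gt0 // lt_min hd1 hd2.
have [s [hs hb]] := hf _ hd.
have hm1 : Num.min d1 d2 <= d1 by rewrite ge_min lexx.
have hm2 : Num.min d1 d2 <= d2 by rewrite ge_min lexx orbT.
have close d : Num.min d1 d2 <= d -> forall x, `|f x - simple_eval s x| < d.
  by move=> hmin x; apply: le_lt_trans (hb x) _; lra.
have := k1 s hs (close _ hm1); have := k2 s hs (close _ hm2).
by rewrite !ltr_norml => /andP [? ?] /andP [? ?]; apply/andP; split; lra.
Qed.

Variables (mu : set Omega -> R) (m : R).
Hypotheses (HA : is_field A) (Hadd : fin_additive A mu).
Hypothesis Hm : forall E, A E -> `|mu E| <= m.

Definition simple_opp (s : seq (R * set Omega)) := [seq (- p.1, p.2) | p <- s].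

Lemma simple_in_sub s1 s2 :
  simple_in A s1 -> simple_in A s2 -> simple_in A (s1 ++ simple_opp s2).
Proof.
move=> h1 h2 p hp; case: (List.in_app_or _ _ _ hp) => [/h1 //|].
by case/List.in_map_iff => q [<- /h2].
Qed.

Lemma simple_eval_sub s1 s2 x :
  simple_eval (s1 ++ simple_opp s2) x = simple_eval s1 x - simple_eval s2 x.
Proof. by rewrite /simple_eval big_cat big_map -sumrN; congr (_ + _); apply: eq_bigr => p _; rewrite mulNr. Qed.

Lemma simple_int_sub (nu : set Omega -> R) s1 s2 :
  simple_int nu (s1 ++ simple_opp s2) = simple_int nu s1 - simple_int nu s2.
Proof. by rewrite /simple_int big_cat big_map -sumrN; congr (_ + _); apply: eq_bigr => p _; rewrite mulNr. Qed.

Lemma simple_int_close f s e s' e' : approximates f s e -> approximates f s' e' ->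
  `|simple_int mu s - simple_int mu s'| <= 2 * m * (e + e').
Proof.
move=> [hs he hb] [hs' he' hb']; rewrite -simple_int_sub.
apply: (simple_int_bound HA Hadd Hm).
- exact: simple_in_sub.
- exact: addr_ge0.
move=> x; rewrite simple_eval_sub.
have := hb x; have := hb' x; rewrite !ler_norml => /andP [? ?] /andP [? ?].
by apply/andP; split; lra.
Qed.

Lemma approx_limit_ex f : in_B A f -> exists r, forall s e,
  approximates f s e -> `|simple_int mu s - r| <= 2 * m * e.
Proof.
move=> hf; have hm := charge_bound_ge0 HA Hm.
pose L := [set y | exists s e, approximates f s e /\ y = simple_int mu s - 2 * m * e].
have [s0 [hs0 hb0]] := hf 1 ltr01.
have a0 : approximates f s0 1 by split; rewrite // ler01.
have hL : has_sup L.
  split; first by exists (simple_int mu s0 - 2 * m * 1), s0, 1.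
  exists (simple_int mu s0 + 2 * m * 1) => _ [s [e [hse ->]]].
  have := simple_int_close hse a0; rewrite ler_norml => /andP [? ?]; lra.
exists (sup L) => s e hse; rewrite ler_norml; apply/andP; split.
  suff : sup L <= simple_int mu s + 2 * m * e by lra.
  apply: ge_sup; first by case: hL.
  move=> _ [s' [e' [hse' ->]]].
  have := simple_int_close hse hse'; rewrite ler_norml => /andP [? ?]; lra.
suff : simple_int mu s - 2 * m * e <= sup L by lra.
by apply: sup_upper_bound => //; exists s, e.
Qed.

Lemma is_integral_of_approx_limit f r :
  (forall s e, approximates f s e -> `|simple_int mu s - r| <= 2 * m * e) ->
  is_integral A mu f r.
Proof.
move=> hr eps heps; have hm := charge_bound_ge0 HA Hm.
have hpos : 0 < 2 * m + 1 by lra.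
set d := eps / (2 * m + 1).
have hd : 0 < d by exact: divr_gt0.
have hepsd : eps = 2 * m * d + d by rewrite /d; field; rewrite gt_eqF.
exists d; split => // s hs hb.
have := hr s _ (And3 hs (ltW hd) (fun x => ltW (hb x))); lra.
Qed.

Lemma integral_approx f s e : in_B A f -> approximates f s e ->
  `|integral A mu f - simple_int mu s| <= 2 * m * e.
Proof.
move=> hf hse; have [r hr] := approx_limit_ex hf.
have -> : integral A mu f = r.
  apply: xget_unique => [|r' hr']; first exact: is_integral_of_approx_limit.
  exact: is_integral_unique hf hr' (is_integral_of_approx_limit hr).
by rewrite distrC; apply: hr.
Qed.

End Integral.

Section ProbabilityCharges.
Variables (R : realType) (Omega : Type) (A : set (set Omega)).
Hypothesis HA : is_field A.

Lemma pba_norm_le1 (P : set Omega -> R) E : pba A P -> A E -> `|P E| <= 1.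
Proof.
move=> [hadd [hpos h1]] hE.
have := fin_additive_setIC HA hadd (field_setT HA) hE; rewrite !setTI h1.
have := hpos _ (field_setC HA hE); have := hpos _ hE.
by rewrite ler_norml => ? ? ?; apply/andP; split; lra.
Qed.

Lemma pba_ba (P : set Omega -> R) : pba A P -> ba A P.
Proof. by move=> hP; split; [case: hP | exists 1 => E; apply: pba_norm_le1]. Qed.

Lemma approximates_ind E : A E -> approximates A (ind R E) [:: (1, E)] 0.
Proof.
move=> hE; split => // [p [<-|[]] //|x].
by rewrite /simple_eval big_seq1 mul1r subrr normr0.
Qed.

Lemma in_B_ind E : A E -> in_B A (ind R E).
Proof.
move=> hE eps heps; have [hs _ hb] := approximates_ind hE.
by exists [:: (1, E)]; split => // x; apply: le_trans (hb x) (ltW heps).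
Qed.

Lemma integral_ind (mu : set Omega -> R) E : ba A mu -> A E ->
  integral A mu (ind R E) = mu E.
Proof.
move=> [hadd [m hm]] hE; apply/eqP; rewrite -subr_eq0 -normr_le0.
have := integral_approx HA hadd hm (in_B_ind hE) (approximates_ind hE).
by rewrite /simple_int big_seq1 mul1r mulr0.
Qed.

Lemma pba_integral_approx (P : set Omega -> R) f s e : pba A P -> in_B A f ->
  approximates A f s e -> `|integral A P f - simple_int P s| <= 2 * e.
Proof.
move=> hP hf hse; have hb E : A E -> `|P E| <= 1 by apply: pba_norm_le1.
by have := integral_approx HA hP.1 hb hf hse; rewrite mulr1.
Qed.

Lemma conv_hull_pba (S : set (set Omega -> R)) :
  S `<=` pba A -> conv_hull S `<=` pba A.
Proof.
move=> hS nu [l [hl [h1 hnu]]].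
have hl' p : List.In p l -> 0 <= p.1 /\ pba A p.2 by case/hl => ? /hS.
split; [|split].
- move=> E G hE hG hEG; rewrite !hnu -big_split /=.
  by apply: sum_In_eq => p /hl' [_ [hadd _]]; rewrite hadd // mulrDr.
- move=> E hE; rewrite hnu; apply: sum_In_ge0 => p /hl' [hp [_ [hpos _]]].
  exact: mulr_ge0 hp (hpos _ hE).
- rewrite hnu -h1; apply: sum_In_eq => p /hl' [_ [_ [_ ->]]]; exact: mulr1.
Qed.

Lemma weak_star_closure_pba (S : set (set Omega -> R)) :
  S `<=` pba A -> weak_star_closure A S `<=` pba A.
Proof.
move=> hS mu [hmu hcl].
have close E eps : A E -> 0 < eps -> exists nu, S nu /\ `|mu E - nu E| < eps.
  move=> hE heps.
  have [|nu [hnu hf]] := hcl [:: ind R E] eps _ heps; first by move=> f [<-|[]]; exact: in_B_ind.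
  exists nu; split => //; have hnu' := pba_ba (hS _ hnu).
  by have := hf _ (or_introl erefl); rewrite !integral_ind.
split; [exact: hmu.1 | split].
- move=> E hE; apply: ge0_of_near_ge0 => eps heps.
  have [nu [hnu h]] := close E eps hE heps.
  by exists (nu E); split => //; exact: (hS _ hnu).2.1.
- apply: eq_of_dist_lt => eps heps.
  have [nu [hnu h]] := close _ eps (field_setT HA) heps.
  by move: h; rewrite (hS _ hnu).2.2.
Qed.

End ProbabilityCharges.

Lemma Pi_pba (R : realType) (N Omega : Type) (A : set (set Omega))
    (M : N -> set (set Omega)) (t : N -> Omega -> set Omega -> R) i :
  type_space A M t -> Pi A t i `<=` pba A.
Proof.
move=> [HA [_ [_ [ht _]]]]; apply: weak_star_closure_pba => //.
by apply: conv_hull_pba => _ [w _ <-]; exact: ht.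
Qed.

Section UltraLimit.
Variables (R : realType) (T : Type) (U : set_system T).
Hypothesis HU : UltraFilter U.

Definition ultra_lim (h : T -> R) : R := sup [set r | U [set I | r <= h I]].

Lemma ultra_limP (h : T -> R) lo hi : U [set I | lo <= h I <= hi] ->
  forall eps, 0 < eps -> U [set I | `|h I - ultra_lim h| < eps].
Proof.
move=> hb eps heps; set S := [set r | U [set I | r <= h I]].
have hS : has_sup S.
  split; first by exists lo; apply: filterS hb => I /andP [].
  exists hi => r hr; rewrite leNgt; apply/negP => hir.
  have [I [/= h1 /andP [_ h2]]] := filter_ex (filterI hr hb); lra.
have [r hr hlt] := sup_adherent heps hS.
have low : U [set I | ultra_lim h - eps < h I].
  by apply: filterS hr => I /= hI; rewrite /ultra_lim -/S; lra.
have up : U [set I | h I < ultra_lim h + eps].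
  have [//|hc] := in_ultra_setVsetC [set I | h I < ultra_lim h + eps] HU.
  have hs : S (ultra_lim h + eps) by apply: filterS hc => I /= /negP; rewrite -leNgt.
  by have := sup_upper_bound hS hs; rewrite /ultra_lim -/S; lra.
apply: filterS (filterI low up) => I [/= h1 h2].
by rewrite ltr_norml; apply/andP; split; lra.
Qed.

End UltraLimit.

Section UltraLimitCharge.
Variables (R : realType) (Omega : Type) (A : set (set Omega)).
Variables (T : Type) (U : set_system T) (g : T -> set Omega -> R).
Hypotheses (HA : is_field A) (HU : UltraFilter U).
Hypothesis Hg : U [set I | pba A (g I)].

Let mu (E : set Omega) : R := ultra_lim U (fun I => g I E).

Lemma ultra_lim_near E eps : A E -> 0 < eps -> U [set I | `|g I E - mu E| < eps].
Proof.
move=> hE; apply: (ultra_limP HU (lo := 0) (hi := 1)).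
apply: filterS Hg => I hI /=; rewrite hI.2.1 //=.
by have := pba_norm_le1 HA hI hE; rewrite ler_norml => /andP [].
Qed.

Lemma ultra_lim_pba : pba A mu.
Proof.
have near3 P E eps : U P -> A E -> 0 < eps ->
    exists I, [/\ P I, pba A (g I) & `|g I E - mu E| < eps].
  move=> hP hE heps.
  have [I [hPI [hgI h]]] := filter_ex (filterI hP (filterI Hg (ultra_lim_near hE heps))).
  by exists I.
split; [|split].
- move=> E G hE hG hEG; apply: eq_of_dist_lt => eps heps.
  have he3 : 0 < eps / 3 by exact: divr_gt0.
  have [I [[/= h1 h2] hI h3]] :=
    near3 _ _ _ (filterI (ultra_lim_near hE he3) (ultra_lim_near hG he3))
      (field_setU HA hE hG) he3.
  move: h1 h2 h3; rewrite (hI.1 E G hE hG hEG) !ltr_norml.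
  by move=> /andP [? ?] /andP [? ?] /andP [? ?]; apply/andP; split; lra.
- move=> E hE; apply: ge0_of_near_ge0 => eps heps.
  have [I [_ hI h]] := near3 _ _ _ filterT hE heps.
  by exists (g I E); rewrite distrC; split => //; exact: hI.2.1.
- apply: eq_of_dist_lt => eps heps.
  have [I [_ hI h]] := near3 _ _ _ filterT (field_setT HA) heps.
  by move: h; rewrite hI.2.2 distrC.
Qed.

Lemma ultra_lim_simple_int s e : simple_in A s -> 0 < e ->
  U [set I | `|simple_int (g I) s - simple_int mu s| < e].
Proof.
elim: s e => [|[a E] s IH] e hs he.
  by apply: filterS filterT => I _ /=; rewrite /simple_int !big_nil subrr normr0.
have hE : A E by apply: (hs (a, E)); left.
have ha : 0 < `|a| + 1 by rewrite ltr_pwDr.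
set d := e / 2 / (`|a| + 1).
have hd : 0 < d by rewrite !divr_gt0.
have ed : (`|a| + 1) * d = e / 2 by rewrite /d; field; rewrite gt_eqF.
have he2 : 0 < e / 2 by exact: divr_gt0.
have hs' : simple_in A s by move=> p hp; apply: hs; right.
apply: filterS (filterI (ultra_lim_near hE hd) (IH _ hs' he2)) => I [/= h1 h2].
have h3 : `|a * (g I E - mu E)| <= e / 2.
  rewrite normrM; apply: le_trans (ler_wpM2l (normr_ge0 a) (ltW h1)) _.
  by have := normr_ge0 a; lra.
move: h2 h3; rewrite /simple_int !big_cons /= -!/(simple_int _ s).
rewrite !ltr_norml ler_norml => /andP [? ?] /andP [? ?].
by apply/andP; split; lra.
Qed.

Lemma ultra_lim_integral f e : in_B A f -> 0 < e ->
  U [set I | `|integral A mu f - integral A (g I) f| < e].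
Proof.
move=> hf he; have he6 : 0 < e / 6 by exact: divr_gt0.
have [s [hs hb]] := hf _ he6.
have hse : approximates A f s (e / 6) by split; rewrite // ltW.
apply: filterS (filterI Hg (ultra_lim_simple_int hs he6)) => I [hI /= h].
have a1 := pba_integral_approx HA ultra_lim_pba hf hse.
have a2 := pba_integral_approx HA hI hf hse.
move: a1 a2 h; rewrite !ler_norml ltr_norml => /andP [? ?] /andP [? ?] /andP [? ?].
by rewrite ltr_norml; apply/andP; split; lra.
Qed.

Lemma ultra_lim_integrals fs e : (forall f, List.In f fs -> in_B A f) -> 0 < e ->
  U [set I | forall f, List.In f fs -> `|integral A mu f - integral A (g I) f| < e].
Proof.
elim: fs => [|f fs IH] hfs he; first by apply: filterS filterT => I _ f [].
have hfs' f' : List.In f' fs -> in_B A f' by move=> hf'; apply: hfs; right.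
apply: filterS (filterI (ultra_lim_integral (hfs f (or_introl erefl)) he) (IH hfs' he)).
by move=> I [/= h1 h2] f' [<-|/h2].
Qed.

Lemma ultra_lim_weak_star_closure S :
  U [set I | weak_star_closure A S (g I)] -> weak_star_closure A S mu.
Proof.
move=> hS; split; first exact: pba_ba ultra_lim_pba.
move=> fs eps hfs heps; have he2 : 0 < eps / 2 by exact: divr_gt0.
have [I [[_ hcl] /= hI]] := filter_ex (filterI hS (ultra_lim_integrals hfs he2)).
have [nu [hnu hnf]] := hcl fs (eps / 2) hfs he2.
exists nu; split => // f hf; move: (hI f hf) (hnf f hf).
by rewrite !ltr_norml => /andP [? ?] /andP [? ?]; apply/andP; split; lra.
Qed.

End UltraLimitCharge.

Unset Implicit Arguments.

Definition finite_superset_filter (N : Type) : set_system (set N) :=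
  [set X | exists2 J, finite_set J & forall I, finite_set I -> J `<=` I -> X I].

Lemma finite_superset_filter_proper (N : Type) :
  ProperFilter (finite_superset_filter N).
Proof.
apply: Build_ProperFilter_ex; first by move=> X [J hJ hX]; exists J; exact: hX.
split.
- by exists set0; first exact: finite_set0.
- move=> X Y [J1 h1 hX] [J2 h2 hY]; exists (J1 `|` J2); first by rewrite finite_setU.
  by move=> I hI sI; split; [apply: hX | apply: hY] => // x hx; apply: sI; [left|right].
- by move=> X Y sXY [J hJ hX]; exists J => // I hI sI; apply/sXY/hX.
Qed.

Theorem lemma3 (R : realType) (N Omega : Type) (A : set (set Omega))
    (M : N -> set (set Omega)) (t : N -> Omega -> set Omega -> R) :
  inhabited N -> type_space A M t ->
  consistent A t <-> (exists mu, forall i : N, Pi A t i mu).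
Proof.
move=> [i0] hts; split => [hcons|[mu hmu] I _]; last by exists mu.
have common I : exists mu : set Omega -> R,
    finite_set I -> forall i, I i -> Pi A t i mu.
  have [hI|hI] := pselect (finite_set I); last by exists (fun _ => 0).
  by have [mu hmu] := hcons I hI; exists mu.
have [g gP] := choice common.
have [U [HU sFU]] := ultraFilterLemma (finite_superset_filter_proper N).
have Ui i : U [set I | Pi A t i (g I)].
  apply: sFU; exists [set i]; first exact: finite_set1.
  by move=> I hI sI; apply: gP (sI _ _).
have Hg : U [set I | pba A (g I)] by apply: filterS (Ui i0) => I /=; apply: (Pi_pba hts).
exists (fun E => ultra_lim U (fun I => g I E)) => i.
exact: (ultra_lim_weak_star_closure (proj1 hts) HU Hg (Ui i)).
Qed.
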